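(* Let $\mathcal{T} = \{T_1, \ldots, T_t\}$ be a set of unrooted binary phylogenetic trees on a common leaf set $X$, let $\mathcal{Q}$ be the set of quartets that are incompatible quartets of $T_1$ and $T_i$ for some $2 \le i \le t$, and let $\tilde x$ be an optimal solution of the linear program $$\text{minimize } \sum_{e \in E(T_1)} x_e \quad \text{s.t. } \sum_{e \in L(Q)} x_e \ge 1 \ \ \forall Q \in \mathcal{Q}, \qquad x_e \ge 0\ \ \forall e \in E(T_1).$$ Let $E \subseteq E(T_1)$ be the edge set produced by the following rounding procedure. Root $T_1$ at an arbitrary leaf $r$; for each edge $e$ let $u_e$ be its endpoint on the path from $r$ to the other endpoint $v_e$. Start with $E = \emptyset$. For the current $E$ and each edge $e$, let $D(e)$ be the set of edges $f$ such that $v_e$ lies on the path from $r$ to $v_f$ and the path from $v_e$ to $v_f$ contains no edge of $E$ (so $e \in D(e)$), and let $w(e) = \sum_{f \in D(e)} \tilde x_f$. While there exists an edge $e$ with $w(e) \ge 1/4$ and $w(f) < 1/4$ for all $f \in D(e) \setminus \{e\}$, add one such edge $e$ to $E$ (recomputing $D$ and $w$ afterwards); stop when every edge $e \in E(T_1) \setminus E$ has $w(e) < 1/4$. Then the final set satisfies $$|E| \le 4 \sum_{e \in E(T_1)} \tilde x_e.$$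
   Context: A (binary) phylogenetic tree on a finite set $X$ is an unrooted tree whose internal vertices have degree 3 and whose leaves are bijectively labelled by $X$. Two phylogenetic trees on $X$ are isomorphic ($\cong$) if there is a graph isomorphism between them fixing every leaf label. For $Y \subseteq X$, $T[Y]$ is the minimal subtree of $T$ connecting the leaves in $Y$, and $T|_Y$ is obtained from $T[Y]$ by suppressing all degree-2 vertices. A quartet is a 4-element subset of $X$; for $Q=\{a,b,c,d\}$, $ab|cd$ is the tree on $Q$ where $a,b$ share a neighbour $u$, $c,d$ share a neighbour $v$, and $u,v$ are adjacent. If $T_1|_Q \cong ab|cd$, $L(Q)$ is the set of edges of $T_1[\{a,b\}] \cup T_1[\{c,d\}]$. $Q$ is an incompatible quartet of $T_1,T_i$ if $T_1|_Q \not\cong T_i|_Q$. *)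

From HB Require Import structures.
From mathcomp Require Import all_boot all_order all_algebra.
From mathcomp Require Import boolp.
Set Implicit Arguments. Unset Strict Implicit. Unset Printing Implicit Defensive.
Import Order.TTheory GRing.Theory Num.Theory.
Local Open Scope ring_scope.

Section Graph.
Variables (V : finType) (adj : rel V).

Definition is_spath (a b : V) (s : seq V) : Prop :=
  [/\ path adj a s, last a s = b & uniq (a :: s)].

Definition vertex_on_path (a b v : V) : Prop :=
  exists s, is_spath a b s /\ v \in a :: s.

Definition edge_on_path (a b : V) (e : {set V}) : Prop :=
  exists s, is_spath a b s /\ exists2 p, p \in zip (a :: s) s & e = [set p.1; p.2].

Definition deg (v : V) : nat := #|[set w | adj v w]|.

Definition edges : {set {set V}} :=
  [set e | [exists u, exists v, adj u v && (e == [set u; v])]].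

End Graph.

Record ptree (X : finType) := PTree {
  pV : finType;
  padj : rel pV;
  lab : X -> pV;
  padj_sym : symmetric padj;
  padj_irr : irreflexive padj;
  pconn : forall u v : pV, exists s, is_spath padj u v s;
  (* acyclic: simple paths are unique *)
  pacyc : forall (u v : pV) s s', is_spath padj u v s -> is_spath padj u v s' -> s = s';
  lab_inj : injective lab;
  leaves_lab : forall v : pV, deg padj v = 1%N <-> exists x, v = lab x;
  internal_deg3 : forall v : pV, deg padj v != 1%N -> deg padj v = 3%N }.
Arguments pV {X} p.
Arguments padj {X} p.
Arguments lab {X} p.

Section Quartets.
Variables (X : finType).

(* T|_Q is isomorphic to ab|cd, Q = {a,b,c,d} a quartet: the paths a--b and
   c--d of T are vertex-disjoint. *)
Definition restr_is (T : ptree X) (Q : {set X}) (a b c d : X) : Prop :=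
  [/\ #|Q| = 4%N, Q = [set a; b; c; d] &
      forall v, ~ (vertex_on_path (padj T) (lab T a) (lab T b) v /\
                   vertex_on_path (padj T) (lab T c) (lab T d) v)].

(* Q is an incompatible quartet of T1, Ti : T1|_Q is not isomorphic to Ti|_Q *)
Definition incompatible (T1 Ti : ptree X) (Q : {set X}) : Prop :=
  #|Q| = 4%N /\ ~ (forall a b c d, restr_is T1 Q a b c d <-> restr_is Ti Q a b c d).

Definition Lset (T : ptree X) (Q : {set X}) : {set {set pV T}} :=
  [set e | `[< exists a b c d, restr_is T Q a b c d /\
              (edge_on_path (padj T) (lab T a) (lab T b) e \/
               edge_on_path (padj T) (lab T c) (lab T d) e) >]].

Variables (R : realFieldType) (t : nat) (T : 'I_t.+1 -> ptree X).
(* T_1 is T ord0; the trees T_2..T_t are T i, i <> ord0 *)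

Definition quartetsQ (Q : {set X}) : Prop :=
  exists2 i : 'I_t.+1, i != ord0 & incompatible (T ord0) (T i) Q.

Definition lp_feasible (x : {set pV (T ord0)} -> R) : Prop :=
  (forall e, e \in edges (padj (T ord0)) -> 0 <= x e) /\
  (forall Q, quartetsQ Q -> 1 <= \sum_(e in Lset (T ord0) Q) x e).

Definition lp_obj (x : {set pV (T ord0)} -> R) : R :=
  \sum_(e in edges (padj (T ord0))) x e.

Definition lp_optimal (x : {set pV (T ord0)} -> R) : Prop :=
  lp_feasible x /\ forall y, lp_feasible y -> lp_obj x <= lp_obj y.

End Quartets.

Section Rounding.
Variables (V : finType) (adj : rel V) (R : realFieldType) (r : V)
          (x : {set V} -> R).

(* v is the endpoint v_e of the edge e (the other endpoint u_e lies on the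
   path from r to v) *)
Definition lower_end (e : {set V}) (v : V) : Prop :=
  v \in e /\ exists2 u, (u \in e) && (u != v) & vertex_on_path adj r v u.

Definition inD (E : {set {set V}}) (e f : {set V}) : Prop :=
  exists ve vf, [/\ lower_end e ve, lower_end f vf, vertex_on_path adj r vf ve &
     ~ (exists2 g, g \in E & edge_on_path adj ve vf g)].

Definition Dset (E : {set {set V}}) (e : {set V}) : {set {set V}} :=
  [set f in edges adj | `[< inD E e f >]].

Definition wgt (E : {set {set V}}) (e : {set V}) : R :=
  \sum_(f in Dset E e) x f.

(* s lists the edges added by the procedure, in order *)
Definition rounding_run (s : seq {set V}) : Prop :=
  forall k, (k < size s)%N ->
    let E := [set y in take k s] in
    let e := nth set0 s k in
    [/\ e \in edges adj, e \notin E, 1 / 4%:R <= wgt E e &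
        forall f, f \in Dset E e -> f != e -> wgt E f < 1 / 4%:R].

Definition rounding_stopped (s : seq {set V}) : Prop :=
  forall e, e \in edges adj -> e \notin [set y in s] ->
    wgt [set y in s] e < 1 / 4%:R.

End Rounding.
Arguments lp_feasible {X R t} T x.
Arguments lp_obj {X R t} T x.
Arguments lp_optimal {X R t} T x.
Arguments quartetsQ {X t} T Q.

From HB Require Import structures.
From mathcomp Require Import all_boot all_order all_algebra.
From mathcomp Require Import boolp.
From mathcomp Require Import lra.
Set Implicit Arguments. Unset Strict Implicit. Unset Printing Implicit Defensive.
Import Order.TTheory GRing.Theory Num.Theory.
Local Open Scope ring_scope.

(* Let e_1, ..., e_m be the edges chosen by the rounding, in order, and D_k the
   set D(e_k) at the moment e_k is chosen; since w(e_k) >= 1/4 there, it suffices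
   that the D_k are pairwise disjoint.  Suppose j < k and f lies in D_j and D_k.
   The lower endpoints of e_j and e_k both lie on the path from r to v_f.  If
   v_{e_k} is not above v_{e_j}, then e_k lies in D_j, so its weight at time j is
   < 1/4 by the minimality of e_j; weights only decrease as E grows, contradicting
   w(e_k) >= 1/4 at time k.  Otherwise the chosen edge e_j separates v_{e_k} from
   v_f, so f is not in D_k. *)

Lemma zip_cons_cat (T : Type) (a : T) (s1 s2 : seq T) :
  zip (a :: s1 ++ s2) (s1 ++ s2) = zip (a :: s1) s1 ++ zip (last a s1 :: s2) s2.
Proof. by elim: s1 a => [|b s1 IH] a //=; rewrite IH. Qed.

Section Tree.
Variables (V : finType) (adj : rel V).
Hypothesis adj_sym : symmetric adj.
Hypothesis spath_uniq :
  forall (u v : V) s s', is_spath adj u v s -> is_spath adj u v s' -> s = s'.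

Lemma spath_cat a b s1 s2 : is_spath adj a b (s1 ++ s2) ->
  is_spath adj a (last a s1) s1 /\ is_spath adj (last a s1) b s2.
Proof.
case; rewrite cat_path last_cat => /andP[p1 p2] l.
rewrite -cat_cons cat_uniq => /and3P[u1 nh u2].
split; split => //; rewrite /= u2 andbT; apply: contra nh => h.
by apply/hasP; exists (last a s1); rewrite ?mem_last.
Qed.

Lemma spath_split a b c s : is_spath adj a b s -> c \in a :: s ->
  exists s1 s2, [/\ s = s1 ++ s2, is_spath adj a c s1 & is_spath adj c b s2].
Proof.
move=> h cs; case/splitPl: cs h => s1 s2 lc /spath_cat[]; rewrite lc => h1 h2.
by exists s1, s2.
Qed.

Lemma vertex_on_path_antisym a b c :
  vertex_on_path adj a b c -> vertex_on_path adj a c b -> b = c.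
Proof.
move=> [s [hs cs]] [p [hp bp]].
have [s1 [s2 [Es h1 [_ l _]]]] := spath_split hs cs; subst s.
have ps1 := spath_uniq hp h1; subst p.
case: hs => _ _; rewrite -cat_cons cat_uniq => /and3P[_ nh _].
apply/eqP; apply: contraNT nh => nbc; apply/hasP; exists b => //.
by have := mem_last c s2; rewrite l inE (negbTE nbc).
Qed.

Lemma vertex_on_path_total a b c d :
  vertex_on_path adj a b c -> vertex_on_path adj a b d ->
  vertex_on_path adj c b d \/ vertex_on_path adj a c d /\ d != c.
Proof.
move=> [s [hs cs]] [p [hp dp]]; have ps := spath_uniq hp hs; subst p.
have [s1 [s2 [Es h1 h2]]] := spath_split hs cs; subst s.
have [->|ndc] := eqVneq d c; first by left; exists s2; rewrite mem_head.
move: dp; rewrite -cat_cons mem_cat => /orP[ds1|ds2].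
  by right; split => //; exists s1.
by left; exists s2; rewrite inE ds2 orbT.
Qed.

Lemma vertex_on_path_suffix a b c d :
  vertex_on_path adj a b c -> vertex_on_path adj a c d -> vertex_on_path adj d b c.
Proof.
move=> [s [hs cs]] [p [hp dp]].
have [s1 [s2 [Es h1 h2]]] := spath_split hs cs; subst s.
have ps1 := spath_uniq hp h1; subst p.
have [s3 [s4 [Es1 h3 [_ l _]]]] := spath_split h1 dp; subst s1.
move: hs; rewrite -catA => /spath_cat[_]; case: h3 => _ -> _ => h.
by exists (s4 ++ s2); split; rewrite // -cat_cons mem_cat -{1}l mem_last.
Qed.

Lemma vertex_on_path_prefix a b c d :
  vertex_on_path adj a b c -> vertex_on_path adj c b d -> vertex_on_path adj a d c.
Proof.
move=> [s [hs cs]] [p [hp dp]].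
have [s1 [s2 [Es h1 h2]]] := spath_split hs cs; subst s.
have ps2 := spath_uniq hp h2; subst p.
have [s3 [s4 [Es2 h3 _]]] := spath_split h2 dp; subst s2.
case: (h1) => _ l1 _; case: h3 => _ l3 _.
move: hs; rewrite catA => /spath_cat[]; rewrite last_cat l1 l3 => h _.
by exists (s1 ++ s3); split; rewrite // -cat_cons mem_cat -{1}l1 mem_last.
Qed.

Lemma edge_on_path_subl a b c g : vertex_on_path adj a b c ->
  edge_on_path adj a c g -> edge_on_path adj a b g.
Proof.
move=> [s [hs cs]] [p [hp [q qp ->]]].
have [s1 [s2 [Es h1 _]]] := spath_split hs cs; subst s.
have ps1 := spath_uniq hp h1; subst p.
by exists (s1 ++ s2); split => //; exists q; rewrite // zip_cons_cat mem_cat qp.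
Qed.

Lemma edge_on_path_subr a b c g : vertex_on_path adj a b c ->
  edge_on_path adj c b g -> edge_on_path adj a b g.
Proof.
move=> [s [hs cs]] [p [hp [q qp ->]]].
have [s1 [s2 [Es [_ l _] h2]]] := spath_split hs cs; subst s.
have ps2 := spath_uniq hp h2; subst p.
by exists (s1 ++ s2); split => //; exists q; rewrite // zip_cons_cat mem_cat l qp orbT.
Qed.

Lemma spath_adj u v : adj u v -> u != v -> is_spath adj u v [:: v].
Proof. by move=> huv nuv; split; rewrite /= ?huv // inE nuv. Qed.

Lemma edge_on_path_adj u v : adj u v -> u != v -> edge_on_path adj u v [set u; v].
Proof.
by move=> huv nuv; exists [:: v]; split; [exact: spath_adj | exists (u, v); rewrite ?inE].
Qed.

Lemma edges_pair e u v : e \in edges adj -> u \in e -> v \in e -> u != v ->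
  adj u v /\ e = [set u; v].
Proof.
rewrite inE => /existsP[a /existsP[b /andP[hab /eqP ->]]]; rewrite !in_set2.
case/orP=> /eqP-> /orP[]/eqP->; rewrite ?eqxx // => _.
by rewrite adj_sym setUC.
Qed.

Variable r : V.

Lemma lower_end_uniq e v1 v2 : e \in edges adj ->
  lower_end adj r e v1 -> lower_end adj r e v2 -> v1 = v2.
Proof.
move=> ee [v1e [u1 /andP[u1e nu1] op1]] [v2e [u2 /andP[u2e nu2] op2]].
have [//|n12] := eqVneq v1 v2.
have [_ eE] := edges_pair ee v1e v2e n12.
move: u1e u2e op1 op2; rewrite eE !in_set2 (negbTE nu1) (negbTE nu2) orFb orbF.
by move=> /eqP-> /eqP->; exact: vertex_on_path_antisym.
Qed.

Lemma lower_end_on_path e v a : e \in edges adj -> lower_end adj r e v ->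
  vertex_on_path adj r v a -> a != v -> edge_on_path adj a v e.
Proof.
move=> ee [ve [u /andP[ue nuv] ru]] ra nav.
have [huv ->] := edges_pair ee ue ve nuv.
have uv := edge_on_path_adj huv nuv.
case: (vertex_on_path_total ru ra) => [[p [hp ap]] | [ua _]].
  move: ap; rewrite (spath_uniq hp (spath_adj huv nuv)) !inE (negbTE nav) orbF.
  by move=> /eqP->.
exact: edge_on_path_subr (vertex_on_path_suffix ru ua) uv.
Qed.

Lemma inD_overlap (E1 E2 : {set {set V}}) e1 e2 f :
  e1 \in edges adj -> f \in edges adj -> e1 \in E2 ->
  inD adj r E1 e1 f -> inD adj r E2 e2 f -> inD adj r E1 e1 e2.
Proof.
move=> e1E fE e1E2 [v1 [vf [l1 lf op1 no1]]] [v2 [vf' [l2 lf' op2 no2]]].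
have Evf := lower_end_uniq fE lf' lf; subst vf'.
case: (vertex_on_path_total op1 op2) => [v2vf | [v2v1 nv21]].
  exists v1, v2; split => //; first exact: vertex_on_path_prefix op1 v2vf.
  by case=> g gE1 g12; apply: no1; exists g => //; exact: edge_on_path_subl v2vf g12.
case: no2; exists e1 => //.
exact: edge_on_path_subl (vertex_on_path_suffix op1 v2v1)
                         (lower_end_on_path e1E l1 v2v1 nv21).
Qed.

End Tree.

Lemma sum_disjoint_le (R : numDomainType) (I T : finType) (A : {set T})
    (D : I -> {set T}) (x : T -> R) :
    (forall i, D i \subset A) -> (forall i j, i != j -> [disjoint D i & D j]) ->
    (forall f, f \in A -> 0 <= x f) ->
  \sum_i \sum_(f in D i) x f <= \sum_(f in A) x f.
Proof.
move=> DA disjD x0; rewrite -partition_disjoint_bigcup //.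
have /setIidPr {1}<- : \bigcup_i D i \subset A by apply/bigcupsP => i _; exact: DA.
rewrite [X in _ <= X](big_setID (\bigcup_i D i)) /= lerDl sumr_ge0 // => f.
by rewrite inE => /andP[_ /x0].
Qed.

Section Rounding.
Variables (V : finType) (adj : rel V) (r : V).

Lemma Dset_sub_edges E e : Dset adj r E e \subset edges adj.
Proof. by apply/subsetP => f; rewrite inE => /andP[]. Qed.

Lemma Dset_antimono (E E' : {set {set V}}) e :
  E \subset E' -> Dset adj r E' e \subset Dset adj r E e.
Proof.
move=> EE'; apply/subsetP => f; rewrite !inE => /andP[-> /asboolP[ve [vf [le lf op no]]]].
apply/asboolP; exists ve, vf; split => // -[g gE g_on]; apply: no.
by exists g => //; exact: (subsetP EE').
Qed.

Variables (R : realFieldType) (x : {set V} -> R).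
Hypothesis x_ge0 : forall e, e \in edges adj -> 0 <= x e.

Lemma wgt_antimono (E E' : {set {set V}}) e :
  E \subset E' -> wgt adj r x E' e <= wgt adj r x E e.
Proof.
move=> /(Dset_antimono e) DD; rewrite /wgt [X in _ <= X](big_setID (Dset adj r E' e)).
have /setIidPr -> := DD; rewrite lerDl sumr_ge0 // => f.
by rewrite in_setD => /andP[_ /(subsetP (Dset_sub_edges _ _))/x_ge0].
Qed.

Hypothesis adj_sym : symmetric adj.
Hypothesis spath_uniq :
  forall (u v : V) s s', is_spath adj u v s -> is_spath adj u v s' -> s = s'.
Variable s : seq {set V}.
Hypothesis run : rounding_run adj r x s.

Let E_ k : {set {set V}} := [set y in take k s].
Let e_ k : {set V} := nth set0 s k.
Let D_ k : {set {set V}} := Dset adj r (E_ k) (e_ k).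

Lemma run_Dset_disjoint j k : (j < k < size s)%N -> [disjoint D_ j & D_ k].
Proof.
case/andP=> jk ks; have js := ltn_trans jk ks.
have [ejE _ _ small] := run js; have [ekE ek_notin big _] := run ks.
have EjEk : E_ j \subset E_ k.
  by apply/subsetP => y; rewrite !inE -(take_takel s (ltnW jk)); exact: mem_take.
have ej_in : e_ j \in E_ k.
  by rewrite inE /e_ -(nth_take set0 jk) mem_nth // size_takel // ltnW.
apply/pred0P => f /=; apply/negbTE/negP => /andP[fj fk].
have fE := subsetP (Dset_sub_edges _ _) _ fj.
move: fj fk; rewrite !in_set => /andP[_ /asboolP fj] /andP[_ /asboolP fk].
have ekD : e_ k \in D_ j.
  rewrite in_set ekE; apply/asboolP.
  exact: (inD_overlap adj_sym spath_uniq ejE fE ej_in).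
have nek : e_ k != e_ j.
  by apply: contraNneq ek_notin => ekj; rewrite -[nth _ _ k]/(e_ k) ekj.
have := small _ ekD nek; have := wgt_antimono (e_ k) EjEk; move: big; lra.
Qed.

Lemma run_size_le : (size s)%:R <= 4%:R * \sum_(e in edges adj) x e.
Proof.
have one_le k : (k < size s)%N -> 1 <= 4%:R * wgt adj r x (E_ k) (e_ k).
  by move=> ks; have [_ _ big _] := run ks; move: big; lra.
have disj (i j : 'I_(size s)) : i != j -> [disjoint D_ i & D_ j].
  case: (ltngtP i j) => [ij _ | ji _ | /val_inj-> /eqP//].
    by apply: run_Dset_disjoint; rewrite ij ltn_ord.
  by rewrite disjoint_sym; apply: run_Dset_disjoint; rewrite ji ltn_ord.
rewrite -[size s]card_ord -sumr_const.
apply: (@le_trans _ _ (\sum_(k in 'I_(size s)) 4%:R * wgt adj r x (E_ k) (e_ k))).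
  by apply: ler_sum => k _; exact: one_le.
rewrite -mulr_sumr ler_wpM2l ?ler0n //.
exact: sum_disjoint_le (fun k => Dset_sub_edges _ _) disj x_ge0.
Qed.

End Rounding.

Theorem lemma4 (R : realFieldType) (X : finType) (t : nat)
  (T : 'I_t.+1 -> ptree X) (xt : {set pV (T ord0)} -> R)
  (r : X) (s : seq {set pV (T ord0)}) :
  lp_optimal T xt ->
  rounding_run (padj (T ord0)) (lab (T ord0) r) xt s ->
  rounding_stopped (padj (T ord0)) (lab (T ord0) r) xt s ->
  (#|[set e in s]|)%:R <= 4%:R * \sum_(e in edges (padj (T ord0))) xt e.
Proof.
move=> [[xt_ge0 _] _] run _.
apply: le_trans (run_size_le xt_ge0 (@padj_sym _ _) (@pacyc _ _) run).
by rewrite ler_nat cardsE card_size.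
Qed.
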